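(* Let $\kappa$ and $\lambda$ be positive integers, $p$ a prime number, $x \in \mathbb{Z}_p$ a $p$-adic integer that is algebraic over $\mathbb{Q}$, and $(x_n)_{n\ge1}$ a nondecreasing sequence of positive integers such that $x_n \equiv x \pmod{p^n}$ in $\mathbb{Z}_p$ for every $n$. If $(x_n)$ is not eventually constant, then $x_n \ge \lambda n + \kappa$ for every sufficiently large $n$. *)

From mathcomp Require Import all_boot all_order all_algebra.
Set Implicit Arguments. Unset Strict Implicit. Unset Printing Implicit Defensive.
Import GRing.Theory Num.Theory.

(* The ring Z_p of p-adic integers, as the inverse limit of the Z/p^n Z:
   an element is a coherent family of residues x_(n) in [0, p^n)
   with x_(n+1) mod p^n = x_(n).  The ring operations of Z_p act
   componentwise on these residues. *)
Record padic_int (p : nat) := PadicInt {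
  pcoord : nat -> nat ;
  pcoord_lt : forall n, pcoord n < p ^ n ;
  pcoord_coh : forall n, pcoord n.+1 %% p ^ n == pcoord n }.

(* Congruence m = x (mod p^n Z_p) for a natural number m (embedded in Z_p)
   and a p-adic integer x: x - m lies in p^n Z_p, i.e. the n-th residues agree. *)
Definition padic_congr (p : nat) (m : nat) (x : padic_int p) (n : nat) : Prop :=
  m %% p ^ n = pcoord x n.

(* P(x) = 0 in Z_p for an integer polynomial P: all residues of P(x) vanish,
   i.e. P(x_(n)) = 0 mod p^n for every n. *)
Definition padic_root (p : nat) (P : {poly int}) (x : padic_int p) : Prop :=
  forall n, ((P.[(pcoord x n)%:Z])%R = 0 %[mod (p ^ n)%:Z])%Z.

(* x in Z_p is algebraic over Q: root of a nonzero polynomial with rational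
   coefficients; after clearing denominators, of a nonzero integer polynomial. *)
Definition padic_algebraic (p : nat) (x : padic_int p) : Prop :=
  exists P : {poly int}, (P != 0)%R /\ padic_root P x.

From mathcomp Require Import all_boot all_order all_algebra.
From mathcomp Require Import zify.
From Stdlib Require Import Classical.
Import Order.TTheory GRing.Theory Num.Theory.

(** Take a nonzero integer polynomial [P] with [P(x) = 0] in [Z_p].  Since
   [x_n = x (mod p^n)], [p^n] divides [P(x_n)], and [P(x_n) <> 0] once [x_n]
   exceeds the largest natural root of [P], which happens eventually because
   [(x_n)] is nondecreasing and not eventually constant.  Hence
   [p^n <= |P(x_n)| <= C (x_n + 1)^d].  If [x_n < lambda n + kappa] for a
   large [n], the right-hand side is at most a polynomial in [n], which is
   eventually smaller than [2^n <= p^n]. *)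

Lemma poly_lt_exp2 (k c : nat) : exists N, forall n, N <= n -> c * n.+1 ^ k < 2 ^ n.
Proof.
elim: k c => [|k IHk] c.
  exists c => n le_cn; rewrite expn0 muln1.
  exact: leq_ltn_trans le_cn (ltn_expl _ (ltnSn 1)).
have [N HN] := IHk (c * 3 ^ k.+1).
(* With [m = n/2]: [c (n+1)^(k+1) <= (c 3^(k+1) (m+1)^k) (m+1) < 2^m 2^m]. *)
exists N.*2 => n le_Nn; set m := n./2.
have le_Nm : N <= m by rewrite -(half_double N) half_leq.
apply: (@leq_ltn_trans (c * 3 ^ k.+1 * m.+1 ^ k * m.+1)).
  rewrite -mulnA -expnSr -mulnA -expnMn leq_mul2l leq_exp2r //.
  by apply/orP; right; rewrite /m; lia.
apply: (@leq_trans (2 ^ m * 2 ^ m)); last by rewrite -expnD leq_exp2l // addnn /m; lia.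
have := HN m le_Nm; have := ltn_expl m (ltnSn 1).
move: (2 ^ m) (c * 3 ^ k.+1 * m.+1 ^ k) => t s; nia.
Qed.

Local Open Scope ring_scope.

Lemma ler_norm_horner {R : numDomainType} (P : {poly R}) (a : R) :
  `|P.[a]| <= (\sum_(i < size P) `|P`_i|) * (1 + `|a|) ^+ size P.
Proof.
rewrite horner_coef mulr_suml; apply: le_trans (ler_norm_sum _ _ _) _.
apply: ler_sum => i _; rewrite normrM normrX ler_wpM2l //.
apply: le_trans (ler_weXn2l _ (ltnW (ltn_ord i))); last by rewrite lerDl.
by rewrite lerXn2r ?nnegrE ?lerDr ?addr_ge0.
Qed.

Lemma absz_horner_nat_le (P : {poly int}) (m : nat) :
  (`|P.[m%:Z]| <= (\sum_(i < size P) `|(P`_i)%R|) * m.+1 ^ size P)%N.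
Proof.
have sumE : (\sum_(i < size P) `|(P`_i)%R|)%N%:Z = \sum_(i < size P) `|P`_i|.
  by rewrite -natz natr_sum; apply: eq_bigr => i _; rewrite natz abszE.
have powE : (m.+1 ^ size P)%N%:Z = (1 + `|m%:Z|) ^+ size P.
  by rewrite -natz natrX -add1n natrD !natz.
by rewrite -lez_nat PoszM sumE powE abszE ler_norm_horner.
Qed.

Lemma hornerB_factor {R : comNzRingType} (P : {poly R}) (a b : R) :
  exists c, P.[a] - P.[b] = c * (a - b).
Proof.
have /factor_theorem [q Pq] : root (P - P.[b]%:P) b by rewrite rootE !hornerE subrr.
by exists q.[a]; have := congr1 (horner^~ a) Pq; rewrite !hornerE.
Qed.

Lemma dvdz_hornerB (P : {poly int}) (a b d : int) :
  (d %| a - b)%Z -> (d %| P.[a] - P.[b])%Z.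
Proof. by have [c ->] := hornerB_factor P a b; apply: dvdz_mull. Qed.

Lemma roots_bounded {R : idomainType} {P : {poly R}} {u : nat -> R} :
  P != 0 -> injective u -> exists B, forall m, (B <= m)%N -> ~~ root P (u m).
Proof.
move=> nzP inj_u; apply: NNPP => no_bound.
have large_root B : exists2 m, (B <= m)%N & root P (u m).
  apply: NNPP => no_root; apply: no_bound; exists B => m le_Bm.
  by apply/negP => Pum; apply: no_root; exists m.
have roots k : exists s : seq nat, [/\ size s = k, uniq s & all (root P \o u) s].
  elim: k => [|k [s [<- uniq_s roots_s]]]; first by exists [::].
  have [m lt_sm Pum] := large_root (\max_(j <- s) j).+1.
  exists (m :: s); rewrite /= uniq_s roots_s Pum andbT; split=> //.
  apply: contraTN lt_sm => m_s; rewrite -leqNgt.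
  exact: (@leq_bigmax_seq _ s xpredT id m m_s isT).
have [s [size_s uniq_s roots_s]] := roots (size P).
have := max_poly_roots nzP (rs := map u s).
by rewrite all_map roots_s map_inj_uniq // size_map size_s ltnn => /(_ isT uniq_s).
Qed.

Local Close Scope ring_scope.

Lemma unbounded_nondecreasing {u : nat -> nat} {a : nat} :
  (forall n, a <= n -> u n <= u n.+1) ->
  ~ (exists N, forall n, N <= n -> u n = u N) ->
  forall B, exists N, forall n, N <= n -> B <= u n.
Proof.
move=> u_step not_const.
have u_mono : {in [pred n | a <= n] &, {homo u : m n / m <= n}}.
  apply: homo_leq_in => // [m n k|m n|m]; first exact: leq_trans.
    by rewrite !inE => le_am _ k /andP [/ltnW/(leq_trans le_am)].
  by rewrite inE => le_am _; apply: u_step.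
have u_increases N : a <= N -> exists2 n, N <= n & u N < u n.
  move=> le_aN; apply: NNPP => no_incr; apply: not_const; exists N => n le_Nn.
  apply/eqP; rewrite eqn_leq leqNgt (u_mono N n) ?inE ?(leq_trans le_aN) // andbT.
  by apply/negP => lt_Nn; apply: no_incr; exists n.
elim=> [|B [N HN]]; first by exists 0.
have [n le_Nn lt_un] := u_increases (maxn a N) (leq_maxl a N).
have le_an : a <= n := leq_trans (leq_maxl a N) le_Nn.
exists n => k le_nk; apply: leq_ltn_trans (HN _ (leq_maxr a N)) (leq_trans lt_un _).
by rewrite u_mono ?inE ?(leq_trans le_an).
Qed.

Lemma padic_root_dvdz {p : nat} {P : {poly int}} {x : padic_int p} {m n : nat} :
  padic_root P x -> padic_congr m x n -> ((p ^ n)%:Z %| P.[m%:Z]%R)%Z.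
Proof.
move=> Px0 mx.
have /dvdz_mod0P Pxn : (P.[(pcoord x n)%:Z] %% (p ^ n)%:Z)%Z = 0%R.
  by rewrite Px0 mod0z.
rewrite -[P.[_]%R](subrK P.[(pcoord x n)%:Z]%R) rpredD // dvdz_hornerB // -mx.
by rewrite -eqz_mod_dvd -modz_nat modz_mod.
Qed.

Theorem lemma4p6 (kappa lambda p : nat) (x : padic_int p) (xs : nat -> nat) :
  0 < kappa -> 0 < lambda -> prime p ->
  padic_algebraic x ->
  (forall n, 1 <= n -> 0 < xs n) ->
  (forall n, 1 <= n -> xs n <= xs n.+1) ->
  (forall n, 1 <= n -> padic_congr (xs n) x n) ->
  ~ (exists N, forall n, N <= n -> xs n = xs N) ->
  exists N, forall n, N <= n -> lambda * n + kappa <= xs n.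
Proof.
move=> _ _ p_prime [P [nzP Px0]] _ xs_step xs_congr xs_not_const.
set C := \sum_(i < size P) `|(P`_i)%R|.
have [N1 poly_lt] := poly_lt_exp2 (size P) (C * (lambda + kappa) ^ size P).
have [B noroot] := roots_bounded nzP (can_inj absz_nat : injective Posz).
have [N2 xs_large] := unbounded_nondecreasing xs_step xs_not_const B.
exists (maxn 1 (maxn N1 N2)) => n; rewrite !geq_max => /and3P [n_gt0 le_N1n le_N2n].
rewrite leqNgt; apply/negP => xs_small.
have nz_Pxs : (P.[(xs n)%:Z] != 0)%R by apply: noroot; apply: xs_large.
have le_pow_Pxs : p ^ n <= `|P.[(xs n)%:Z]%R|.
  apply: dvdn_leq; first by rewrite absz_gt0.
  by have := padic_root_dvdz Px0 (xs_congr n n_gt0); rewrite dvdzE absz_nat.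
have le_xs : (xs n).+1 <= (lambda + kappa) * n.+1 by nia.
have le_2p : 2 ^ n <= p ^ n by rewrite leq_exp2r ?prime_gt1.
suff : C * (xs n).+1 ^ size P < p ^ n.
  by rewrite ltnNge (leq_trans le_pow_Pxs (absz_horner_nat_le P (xs n))).
apply: leq_ltn_trans (leq_trans (poly_lt n le_N1n) le_2p).
by rewrite -mulnA -expnMn leq_mul2l leq_exp2r ?size_poly_gt0 ?le_xs ?orbT.
Qed.
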